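(* For every $\epsilon>0$ there exist an online convex optimization problem (convex losses $f_1,f_2,\dots$ with uniformly bounded gradients on a convex feasible set $\mathcal{F}$ of bounded $\ell_\infty$-diameter) and parameters $\beta_1,\beta_2\in[0,1)$ with $\beta_1^2/\sqrt{\beta_2}<1$ and step sizes $\alpha_t=\alpha/\sqrt{t}$ such that Adam with the $\epsilon$-modified update has non-vanishing average regret, i.e. $R_T/T\not\to0$ as $T\to\infty$.
   Context: Regret: $R_T=\sum_{t=1}^T f_t(x_t)-\min_{x\in\mathcal{F}}\sum_{t=1}^T f_t(x)$. $\Pi_{\mathcal{F},A}(y)=\arg\min_{x\in\mathcal{F}}\|A^{1/2}(x-y)\|$. Adam with the $\epsilon$-modified update: $x_1\in\mathcal{F}$, $m_0=v_0=0$; for each $t$: $g_t=\nabla f_t(x_t)$, $m_t=\beta_1 m_{t-1}+(1-\beta_1)g_t$, $v_t=\beta_2 v_{t-1}+(1-\beta_2)g_t^2$, $V_t=\mathrm{diag}(v_t)$, $\hat x_{t+1}=x_t-\alpha_t m_t/\sqrt{V_t+\epsilon I}$, $x_{t+1}=\Pi_{\mathcal{F},\sqrt{V_t}}(\hat x_{t+1})$ (coordinatewise operations). The parameter conditions $\beta_1,\beta_2\in[0,1)$, $\beta_1^2/\sqrt{\beta_2}<1$, $\alpha_t=\alpha/\sqrt t$ are those of Kingma and Ba's convergence analysis of Adam. *)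

From mathcomp Require Import all_boot all_order all_algebra.
From mathcomp Require Import all_classical all_reals all_analysis.
Set Implicit Arguments. Unset Strict Implicit. Unset Printing Implicit Defensive.
Import Order.TTheory GRing.Theory Num.Theory numFieldNormedType.Exports.
Local Open Scope classical_set_scope.
Local Open Scope ring_scope.

Section Defs.
Variables (R : realType) (d : nat).
Implicit Types (F : set 'rV[R]_d) (f : 'rV[R]_d -> R) (x y w : 'rV[R]_d).

Definition grad f x : 'rV[R]_d := \row_(i < d) derive f x (delta_mx 0 i).

Definition convex_set_on F : Prop :=
  forall x y (l : R), F x -> F y -> 0 <= l <= 1 -> F (l *: x + (1 - l) *: y).

Definition convex_fun_on F f : Prop :=
  forall x y (l : R), F x -> F y -> 0 <= l <= 1 ->
    f (l *: x + (1 - l) *: y) <= l * f x + (1 - l) * f y.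

(* || A^{1/2} z ||_2 for A = diag(w), w >= 0 *)
Definition wnorm w (z : 'rV[R]_d) : R :=
  Num.sqrt (\sum_(i < d) w 0 i * (z 0 i) ^+ 2).

(* p is a value of Pi_{F,diag w}(y) = argmin_{q in F} ||diag(w)^{1/2} (q - y)|| *)
Definition is_proj F w y (p : 'rV[R]_d) : Prop :=
  F p /\ forall q, F q -> wnorm w (p - y) <= wnorm w (q - y).

(* (x, m, v) is a run of Adam with the eps-modified update started at x1;
   losses f_1, f_2, ... are f 1, f 2, ... ; V_t = diag (v t). *)
Definition adam_run (eps b1 b2 alpha : R) (f : nat -> 'rV[R]_d -> R) F
    (x1 : 'rV[R]_d) (x m v : nat -> 'rV[R]_d) : Prop :=
  [/\ x 1%N = x1, m 0%N = 0, v 0%N = 0 &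
   forall t : nat, (1 <= t)%N ->
     let g := grad (f t) (x t) in
     [/\ m t = b1 *: m t.-1 + (1 - b1) *: g,
         v t = b2 *: v t.-1 + (1 - b2) *: map_mx (fun a => a ^+ 2) g &
         is_proj F (map_mx Num.sqrt (v t))
           (x t - \row_(i < d) ((alpha / Num.sqrt t%:R) * m t 0 i
                                  / Num.sqrt (v t 0 i + eps)))
           (x t.+1)]].

Definition regret (f : nat -> 'rV[R]_d -> R) F (x : nat -> 'rV[R]_d) (T : nat) : R :=
  \sum_(1 <= t < T.+1) f t (x t)
  - inf [set \sum_(1 <= t < T.+1) f t y | y in F].

End Defs.

From mathcomp Require Import all_boot all_order all_algebra.
From mathcomp Require Import all_classical all_reals all_analysis.
From mathcomp Require Import ring lra.
Set Implicit Arguments. Unset Strict Implicit. Unset Printing Implicit Defensive.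
Import Order.TTheory GRing.Theory Num.Theory numFieldNormedType.Exports.
Local Open Scope classical_set_scope.
Local Open Scope ring_scope.

(* The counterexample lives in the plane: F is the square [-1, 1]^2 cut by the
   half-plane 27 x0 + 64 x1 <= 0, and every loss is linear with gradient
   -s (3/4, 4/3), where s = sqrt eps.  With b1 = 0 and b2 = 3/4 the second
   moment is constant, v = s^2 (3/4, 4/3)^2, so sqrt (v + eps) = s (5/4, 5/3)
   and every Adam step moves along a positive multiple of (3/5, 4/5).  In the
   metric weighted by sqrt v this direction is the outward normal of the cut
   through the origin, so projecting sends every iterate back to 0, where all
   losses vanish.  The feasible point (1, -27/64) has loss at most -3s/16 in
   every round, hence R_T >= 3sT/16. *)

Section LinearLosses.
Variable R : realType.

Lemma derive_linear (V : normedModType R) (f : V -> R) x v :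
  (forall (a b : R) y z, f (a *: y + b *: z) = a * f y + b * f z) ->
  derive f x v = f v.
Proof.
move=> f_lin; rewrite /derive; apply: cvg_lim => //.
apply: cvg_near_cst; near=> h.
rewrite /= -[x in f (_ + x)]scale1r f_lin mul1r addrK.
have h_neq0 : h != 0 by near: h; exact: nbhs_dnbhs_neq.
by rewrite /GRing.scale /= mulrA mulVf // mul1r.
Unshelve. all: by end_near.
Qed.

Lemma grad_linear d (f : 'rV[R]_d -> R) x :
  (forall (a b : R) y z, f (a *: y + b *: z) = a * f y + b * f z) ->
  grad f x = \row_i f (delta_mx 0 i).
Proof. by move=> f_lin; apply/rowP => i; rewrite !mxE derive_linear. Qed.

Lemma convex_fun_on_linear d (F : set 'rV[R]_d) (f : 'rV[R]_d -> R) :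
  (forall (a b : R) y z, f (a *: y + b *: z) = a * f y + b * f z) ->
  convex_fun_on F f.
Proof. by move=> f_lin x y l _ _ _; rewrite f_lin. Qed.

End LinearLosses.

Section WeightedProjection.
Variables (R : realType) (d : nat).
Implicit Types (F : set 'rV[R]_d) (w y z p : 'rV[R]_d).

(* Expanding [|p - y|_w^2 <= |z - y|_w^2] around [z] gives
   [|p - z|_w^2 <= 2 <y - z, p - z>_w <= 0]. *)
Lemma is_proj_normal_cone F w y z p :
  (forall i, 0 < w 0 i) -> F z ->
  (forall q, F q -> \sum_i w 0 i * (y 0 i - z 0 i) * (q 0 i - z 0 i) <= 0) ->
  is_proj F w y p -> p = z.
Proof.
move=> w_gt0 Fz normal [Fp /(_ z Fz)].
pose a i := p 0 i - z 0 i; pose b i := y 0 i - z 0 i.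
have w_ge0 i : 0 <= w 0 i by exact/ltW.
rewrite /wnorm ler_sqrt; last by apply: sumr_ge0 => i _; rewrite mulr_ge0 ?sqr_ge0.
have -> : \sum_i w 0 i * ((p - y) 0 i) ^+ 2 = \sum_i w 0 i * (a i - b i) ^+ 2.
  by apply: eq_bigr => i _; rewrite !mxE /a /b; congr (_ * _); ring.
have -> : \sum_i w 0 i * ((z - y) 0 i) ^+ 2 = \sum_i w 0 i * b i ^+ 2.
  by apply: eq_bigr => i _; rewrite !mxE /b; congr (_ * _); ring.
move=> closer; have := normal p Fp; rewrite -/(a _) => cone.
have expand : \sum_i w 0 i * a i ^+ 2 = \sum_i w 0 i * (a i - b i) ^+ 2
    - \sum_i w 0 i * b i ^+ 2 + 2 * \sum_i w 0 i * b i * a i.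
  rewrite -sumrB mulr_sumr -big_split /=.
  by apply: eq_bigr => i _; ring.
have sum_eq0 : \sum_i w 0 i * a i ^+ 2 = 0.
  apply/eqP; rewrite eq_le sumr_ge0 ?andbT; last by move=> i _; rewrite mulr_ge0 ?sqr_ge0.
  rewrite expand; lra.
apply/rowP => i; apply/eqP; rewrite -subr_eq0 -/(a i) -sqrf_eq0.
have := psumr_eq0P (fun i _ => mulr_ge0 (w_ge0 i) (sqr_ge0 (a i))) sum_eq0 (erefl true).
by move=> /(_ i) /eqP; rewrite mulf_eq0 (gt_eqF (w_gt0 i)).
Qed.

End WeightedProjection.

Section Regret.
Variables (R : realType) (d : nat).

Lemma regret_ge_comparator (f : nat -> 'rV[R]_d -> R) (F : set 'rV[R]_d)
    (x : nat -> 'rV[R]_d) (T : nat) (lb : R) y :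
  (forall t z, F z -> lb <= f t z) -> F y ->
  \sum_(1 <= t < T.+1) f t (x t) - \sum_(1 <= t < T.+1) f t y <= regret f F x T.
Proof.
move=> f_ge Fy; rewrite /regret lerB //.
apply: ge_inf; last by exists y.
exists (\sum_(1 <= t < T.+1) lb) => _ [z Fz <-].
by apply: ler_sum => t _; exact: f_ge.
Qed.

Lemma linear_growth_not_cvg0 (r : nat -> R) (c : R) : 0 < c ->
  (forall T, (1 <= T)%N -> c * T%:R <= r T) ->
  ~ ((fun T : nat => r T / T%:R) @ \oo --> (0 : R)).
Proof.
move=> c_gt0 r_ge /cvgrPdist_lt /(_ c c_gt0) [N _ /(_ N.+1 (leqnSn N))].
rewrite sub0r normrN; apply/negP; rewrite -leNgt.
apply: le_trans (ler_norm _).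
by rewrite ler_pdivlMr ?ltr0n // r_ge.
Qed.

End Regret.

Lemma ord2_cases (i : 'I_2) : i = 0 \/ i = 1.
Proof. by case: i => [[|[|//]] hi]; [left | right]; apply: val_inj. Qed.

Lemma sum_ord2 (V : nmodType) (F : 'I_2 -> V) : \sum_(i < 2) F i = F 0 + F 1.
Proof. by rewrite !big_ord_recl big_ord0 addr0; congr (F _ + F _); apply: val_inj. Qed.

Section Counterexample.
Variables (R : realType) (s : R).

Definition feasible : set 'rV[R]_2 :=
  [set x | 27 * x 0 0 + 64 * x 0 1 <= 0 /\ `|x 0 0| <= 1 /\ `|x 0 1| <= 1].

(* The doubled first loss makes [v 1] already the fixed point of the
   second-moment recursion for [b2 = 3/4]. *)
Definition round_weight (t : nat) : R := if t == 1%N then 2 else 1.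

Definition loss (t : nat) (x : 'rV[R]_2) : R :=
  round_weight t * (- (3/4 * s) * x 0 0 - (4/3 * s) * x 0 1).

Definition steady_moment : 'rV[R]_2 :=
  \row_i (if i == 0 then (3/4 * s) ^+ 2 else (4/3 * s) ^+ 2).

Definition comparator : 'rV[R]_2 := \row_i (if i == 0 then 1 else - (27/64)).

Lemma feasible0 : feasible 0.
Proof. by rewrite /feasible /= !mxE normr0; lra. Qed.

Lemma feasible_comparator : feasible comparator.
Proof. by rewrite /feasible /= !mxE /= normrN !ger0_norm; lra. Qed.

Lemma feasible_convex : convex_set_on feasible.
Proof.
move=> x y l [x_cut [x0 x1]] [y_cut [y0 y1]] /andP[l_ge0 l_le1].
have convex_unit_interval (a b : R) : `|a| <= 1 -> `|b| <= 1 -> `|l * a + (1 - l) * b| <= 1.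
  move=> a1 b1; apply: (le_trans (ler_normD _ _)).
  rewrite !normrM (ger0_norm l_ge0) (@ger0_norm _ (1 - l)); last lra.
  have : l * `|a| <= l by rewrite -[leRHS]mulr1 ler_wpM2l.
  have : (1 - l) * `|b| <= 1 - l by rewrite -[leRHS]mulr1 ler_wpM2l //; lra.
  lra.
rewrite /feasible /= !mxE; split; first nra.
by split; apply: convex_unit_interval.
Qed.

Lemma feasible_closed : closed feasible.
Proof.
have coord_cont (i : 'I_2) : continuous (fun x : 'rV[R]_2 => x 0 i).
  by move=> x; exact: coord_continuous.
have -> : feasible = (fun x => 27 * x 0 0 + 64 * x 0 1) @^-1` [set r | r <= 0]
    `&` ((fun x => `|x 0 0|) @^-1` [set r | r <= 1]
    `&` (fun x => `|x 0 1|) @^-1` [set r | r <= 1]).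
  by apply/seteqP; split => x.
apply: closedI; last apply: closedI;
  (apply: preimage_closed; last exact: closed_le) => x _.
- exact: continuousD (continuousM (@cst_continuous _ _ (27 : R) x) (coord_cont 0 x))
                     (continuousM (@cst_continuous _ _ (64 : R) x) (coord_cont 1 x)).
- by apply: continuous_comp; [exact: coord_cont | exact: norm_continuous].
- by apply: continuous_comp; [exact: coord_cont | exact: norm_continuous].
Qed.

Lemma feasible_coord_dist x y i : feasible x -> feasible y -> `|x 0 i - y 0 i| <= 2.
Proof.
move=> [_ [x0 x1]] [_ [y0 y1]]; apply: le_trans (ler_normB _ _) _.
by case: (ord2_cases i) => ->; lra.
Qed.

Lemma round_weight_bounds t : 1 <= round_weight t <= 2.
Proof. by rewrite /round_weight; case: (t == 1)%N; apply/andP; split; lra. Qed.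

Lemma loss_linear t (a b : R) y z :
  loss t (a *: y + b *: z) = a * loss t y + b * loss t z.
Proof. by rewrite /loss !mxE; ring. Qed.

Lemma loss_differentiable t x : differentiable (loss t) x.
Proof.
rewrite /loss; apply: differentiableM; first exact: differentiable_cst.
by apply: differentiableB; apply: differentiableM;
  (exact: differentiable_cst || exact: differentiable_coord).
Qed.

Lemma grad_loss t x : grad (loss t) x =
  \row_i (round_weight t * (if i == 0 then - (3/4 * s) else - (4/3 * s))).
Proof.
rewrite grad_linear; last exact: loss_linear.
by apply/rowP => i; rewrite /loss !mxE; case: (ord2_cases i) => -> /=; ring.
Qed.

Lemma grad_loss_bound (s_gt0 : 0 < s) t x i : `|grad (loss t) x 0 i| <= 3 * s.
Proof.
have /andP[w_ge1 w_le2] := round_weight_bounds t.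
rewrite grad_loss mxE normrM (@ger0_norm _ (round_weight t)); last lra.
by case: (ord2_cases i) => -> /=; rewrite normrN ger0_norm; nra.
Qed.

Lemma loss_ge (s_gt0 : 0 < s) t y : feasible y -> - (5 * s) <= loss t y.
Proof.
move=> [_ [y0 y1]]; move: y0 y1.
rewrite /loss !ler_norml => /andP[y0 y0'] /andP[y1 y1'].
have /andP[w_ge1 w_le2] := round_weight_bounds t.
have : - (25/12 * s) <= - (3/4 * s) * y 0 0 - (4/3 * s) * y 0 1 by nra.
nra.
Qed.

Lemma loss_comparator (s_gt0 : 0 < s) t : loss t comparator <= - (3/16 * s).
Proof.
have /andP[w_ge1 w_le2] := round_weight_bounds t.
rewrite /loss !mxE /=; nra.
Qed.

Lemma loss0 t : loss t 0 = 0.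
Proof. by rewrite /loss !mxE; ring. Qed.

(* Weighting [(3/5, 4/5)] by [s (3/4, 4/3)] gives [s/60 (27, 64)]. *)
Lemma proj_feasible_eq0 (s_gt0 : 0 < s) (b : R) p : 0 <= b ->
  is_proj feasible (\row_i (if i == 0 then 3/4 * s else 4/3 * s))
    (\row_i (if i == 0 then b * (3/5) else b * (4/5))) p -> p = 0.
Proof.
move=> b_ge0; apply: is_proj_normal_cone feasible0 _.
  by move=> i; rewrite mxE; case: (ord2_cases i) => -> /=; lra.
move=> q [q_cut _]; rewrite sum_ord2 !mxE /= !subr0.
have : 0 <= s * b by rewrite mulr_ge0 // ltW.
nra.
Qed.

Lemma sqrt_steady_moment (s_gt0 : 0 < s) :
  map_mx Num.sqrt steady_moment = \row_i (if i == 0 then 3/4 * s else 4/3 * s).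
Proof.
apply/rowP => i; rewrite !mxE.
by case: (ord2_cases i) => -> /=; rewrite sqrtr_sqr ger0_norm //; lra.
Qed.

(* [(3/4)^2 + 1 = (5/4)^2] and [(4/3)^2 + 1 = (5/3)^2]. *)
Lemma adam_direction (s_gt0 : 0 < s) (c : R) t y :
  - \row_i (c * grad (loss t) y 0 i / Num.sqrt (steady_moment 0 i + s ^+ 2)) =
  \row_i (if i == 0 then c * round_weight t * (3/5) else c * round_weight t * (4/5)).
Proof.
apply/rowP => i; rewrite grad_loss !mxE; case: (ord2_cases i) => -> /=.
- rewrite (_ : (3/4 * s) ^+ 2 + s ^+ 2 = (5/4 * s) ^+ 2); last by field.
  by rewrite sqrtr_sqr ger0_norm; [field; rewrite gt_eqF | lra].
- rewrite (_ : (4/3 * s) ^+ 2 + s ^+ 2 = (5/3 * s) ^+ 2); last by field.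
  by rewrite sqrtr_sqr ger0_norm; [field; rewrite gt_eqF | lra].
Qed.

Section AdamRun.
Variables x m v : nat -> 'rV[R]_2.
Hypothesis run : adam_run (s ^+ 2) 0 (3/4) 1 loss feasible 0 x m v.

Lemma adam_second_moment t : (1 <= t)%N -> v t = steady_moment.
Proof.
case: run => _ _ v0 step; elim: t => [//|[|t] IH] _.
- have [_ -> _] := step 1%N isT.
  rewrite v0 scaler0 add0r; apply/rowP => i; rewrite grad_loss !mxE /round_weight /=.
  by case: (ord2_cases i) => -> /=; field.
- have [_ -> _] := step t.+2 isT.
  rewrite IH //; apply/rowP => i; rewrite grad_loss !mxE /round_weight /=.
  by case: (ord2_cases i) => -> /=; field.
Qed.

Lemma adam_iterate_eq0 (s_gt0 : 0 < s) t : (1 <= t)%N -> x t = 0.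
Proof.
case: run => x1 _ _ step; elim: t => [//|[|t] IH] _; first by [].
have [m_t _] := step t.+1 isT.
rewrite adam_second_moment // m_t IH // sqrt_steady_moment //.
rewrite scale0r !add0r subr0 scale1r adam_direction //.
apply: proj_feasible_eq0 => //.
have /andP[w_ge1 _] := round_weight_bounds t.+1.
by rewrite !mulr_ge0 ?divr_ge0 ?sqrtr_ge0 //; lra.
Qed.

Lemma adam_regret_ge (s_gt0 : 0 < s) T : 3/16 * s * T%:R <= regret loss feasible x T.
Proof.
apply: le_trans (regret_ge_comparator x T (loss_ge s_gt0) feasible_comparator).
have -> : \sum_(1 <= t < T.+1) loss t (x t) = 0.
  rewrite big_nat_cond big1 // => t /andP[/andP[t_ge1 _] _].
  by rewrite adam_iterate_eq0 // loss0.
have : \sum_(1 <= t < T.+1) loss t comparator <= \sum_(1 <= t < T.+1) - (3/16 * s).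
  by apply: ler_sum => t _; exact: loss_comparator.
by rewrite sumr_const_nat subSS subn0 -mulr_natr; lra.
Qed.

End AdamRun.

End Counterexample.

Theorem theorem6 (R : realType) (eps : R) (heps : 0 < eps) :
  exists (d : nat) (F : set 'rV[R]_d) (f : nat -> 'rV[R]_d -> R)
         (b1 b2 alpha : R) (x1 : 'rV[R]_d),
    (* the online convex optimization problem *)
    (F !=set0 /\ convex_set_on F /\ closed F /\
        (exists D : R, forall x y, F x -> F y ->
            forall i : 'I_d, `|x 0 i - y 0 i| <= D) /\
        (forall t : nat, (1 <= t)%N -> convex_fun_on F (f t)) /\
        (forall t : nat, (1 <= t)%N -> forall x, F x -> differentiable (f t) x) /\
        (exists G : R, forall t : nat, (1 <= t)%N -> forall x, F x ->
            forall i : 'I_d, `|grad (f t) x 0 i| <= G)) /\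
    (* the parameters *)
    [/\ 0 <= b1 < 1, 0 <= b2 < 1, b1 ^+ 2 < Num.sqrt b2, 0 < alpha & F x1] /\
    (* every run of Adam has non-vanishing average regret *)
    (forall x m v : nat -> 'rV[R]_d,
       adam_run eps b1 b2 alpha f F x1 x m v ->
       ~ ((fun T : nat => regret f F x T / T%:R) @ \oo --> (0 : R))).
Proof.
pose s := Num.sqrt eps.
have s_gt0 : 0 < s by rewrite sqrtr_gt0.
have eps_sq : eps = s ^+ 2 by rewrite sqr_sqrtr // ltW.
exists 2%N, (@feasible R), (loss s), 0, (3/4), 1, 0.
split.
  split; first by exists 0; exact: feasible0.
  split; first exact: feasible_convex.
  split; first exact: feasible_closed.
  split; first by exists 2 => y z Fy Fz i; exact: feasible_coord_dist.
  split; first by move=> t _; apply: convex_fun_on_linear; exact: loss_linear.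
  split; first by move=> t _ y _; exact: loss_differentiable.
  by exists (3 * s) => t _ y _ i; exact: grad_loss_bound.
split.
  split; rewrite ?expr0n ?sqrtr_gt0 ?ltr01 ?lexx //=; try exact: feasible0.
  by apply/andP; split; lra.
move=> x m v; rewrite eps_sq => run.
apply: (@linear_growth_not_cvg0 _ _ (3/16 * s)); first by rewrite mulr_gt0.
by move=> T _; exact: adam_regret_ge run s_gt0 T.
Qed.
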